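(* Let $Q$ and $W$ satisfy the standing assumptions with $W=Y$, and let $l\ge1$. If $Q$ is future unique w.r.t. $I^l_l$, then $Q$ is domino consistent.
   Context: Strings and signals: $\diamond$ is a symbol not in any other set considered. For a set $A$ and $l\in\mathbb N_0$, $A^l$ is the set of strings of length $l$ over $A$, indexed $\zeta=\zeta(0)\cdots\zeta(l-1)$. For a map $w$ on $\mathbb Z$ (or a string) and integers $t_1\le t_2$, $w|_{[t_1,t_2]}=w(t_1)\cdots w(t_2)$ is the string of length $t_2-t_1+1$ (absolute time forgotten). For a set $\mathcal S$ of such maps, $\mathcal S|_{[t_1,t_2]}=\{s|_{[t_1,t_2]}:s\in\mathcal S\}$. State machines: a state machine is $Q=(X,U,Y,\delta,X_0)$ with $X_0\subseteq X$, $\delta\subseteq X\times U\times Y\times X$. Let $H_\delta(x)=\{y:\exists u,x'.\,(x,u,y,x')\in\delta\}$, $F_\delta(x,u)=\{x':\exists y\in H_\delta(x).\,(x,u,y,x')\in\delta\}$. The full behavior $\mathcal B_f(Q)$ is the set of $(\mu,\nu,\xi)\in(U\times Y\times X)^{\mathbb N_0}$ with $\xi(0)\in X_0$ and $(\xi(k),\mu(k),\nu(k),\xi(k+1))\in\delta$ for all $k\in\mathbb N_0$. $Q$ is live and reachable if every $x\in X_0$ is $\xi(0)$ for some $(\mu,\nu,\xi)\in\mathcal B_f(Q)$ and every $x\in X$ is $\xi(k)$ for some such trajectory and some $k$. Standing assumptions: $Q=(X,U,Y,\delta,X_0)$ is live and reachable and satisfies $(x,u,y,x')\in\delta\iff(x'\in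 F_\delta(x,u)\wedge y\in H_\delta(x))$ for all $x,x'\in X,u\in U,y\in Y$; the external signal space $W$ is finite and either $W=U\times Y$ or $W=Y$ (here $W=Y$). Behaviors: $\mathcal B(Q)$ is the set of $w:\mathbb Z\to Y\cup\{\diamond\}$ such that for some $(\mu,\nu,\xi)\in\mathcal B_f(Q)$, $w(k)=\diamond$ for $k<0$ and $w(k)=\nu(k)$ for $k\ge0$. $\mathcal B_S(Q)$ is the set of pairs $(w,\xi)$ of maps on $\mathbb Z$ with $w(k)=\xi(k)=\diamond$ for $k<0$ and $(w(k),\xi(k))=(\nu(k),\xi'(k))$ for $k\ge0$, for some $(\mu,\nu,\xi')\in\mathcal B_f(Q)$. For a set $\mathcal B$ of maps on $\mathbb Z$, $\Pi_l(\mathcal B)=\bigcup_{k\in\mathbb N_0}\mathcal B|_{[k-l+1,k]}$. Corresponding strings: for integers $a,b$ and $x\in X$, $E^{[a,b]}(x)=\{\zeta:\exists(w,\xi)\in\mathcal B_S(Q),k\in\mathbb N_0:\ \xi(k)=x,\ \zeta=w|_{[k+a,k+b]}\}$. For $l,m\in\mathbb N_0$ with $m\le l$, $I^l_m=[m-l,m-1]$; in particular $I^l_l=[0,l-1]$. Future uniqueness: $Q$ is future unique w.r.t. $I^l_m$ if for all $x\in X$ and $\zeta,\zeta'\in E^{I^l_m}(x)$, $\zeta|_{[l-m,l-1]}=\zeta'|_{[l-m,l-1]}$. Quotient state space (for $W=Y$): $\hat X^{l\triangledown}=\{E^{I^l_l}(x):x\in X\}$. Domino consistency (for $W=Y$):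 $Q$ is domino consistent if for all $\zeta\in\Pi_{l+1}(\mathcal B(Q))$ and all $\hat y\in\hat X^{l\triangledown}$ with $\zeta|_{[0,l-1]}\in\hat y$ there exists $x\in X$ with $E^{I^l_l}(x)=\hat y$ and $\zeta\in E^{[0,l]}(x)$. *)

From Stdlib Require Import ZArith List.
Import ListNotations.
Open Scope Z_scope.
Set Implicit Arguments.

(* The symbol diamond is represented by [None]; a value a by [Some a]. *)

Definition restr {A : Type} (w : Z -> A) (t1 t2 : Z) : list A :=
  map (fun i : nat => w (t1 + Z.of_nat i)) (seq 0 (Z.to_nat (t2 - t1 + 1))).

Definition str_restr {A : Type} (s : list A) (t1 t2 : nat) : list A :=
  firstn (t2 + 1 - t1) (skipn t1 s).

Section SM.
Variables (X U Y : Type) (delta : X -> U -> Y -> X -> Prop) (X0 : X -> Prop).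

Definition H_delta (x : X) (y : Y) : Prop :=
  exists u x', delta x u y x'.

Definition F_delta (x : X) (u : U) (x' : X) : Prop :=
  exists y, H_delta x y /\ delta x u y x'.

Definition full_beh (mu : nat -> U) (nu : nat -> Y) (xi : nat -> X) : Prop :=
  X0 (xi 0%nat) /\
  forall k : nat, delta (xi k) (mu k) (nu k) (xi (S k)).

Definition live_reachable : Prop :=
  (forall x, X0 x -> exists mu nu xi, full_beh mu nu xi /\ xi 0%nat = x) /\
  (forall x : X, exists mu nu xi (k : nat), full_beh mu nu xi /\ xi k = x).

Definition standing_delta : Prop :=
  forall x x' u y, delta x u y x' <-> (F_delta x u x' /\ H_delta x y).

Definition in_B (w : Z -> option Y) : Prop :=
  exists mu nu xi, full_beh mu nu xi /\
    (forall k, k < 0 -> w k = None) /\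
    (forall k : nat, w (Z.of_nat k) = Some (nu k)).

Definition in_BS (w : Z -> option Y) (xs : Z -> option X) : Prop :=
  exists mu nu xi, full_beh mu nu xi /\
    (forall k, k < 0 -> w k = None /\ xs k = None) /\
    (forall k : nat, w (Z.of_nat k) = Some (nu k) /\ xs (Z.of_nat k) = Some (xi k)).

Definition in_Pi_B (l : nat) (z : list (option Y)) : Prop :=
  exists w (k : nat), in_B w /\
    z = restr w (Z.of_nat k - Z.of_nat l + 1) (Z.of_nat k).

Definition E (a b : Z) (x : X) (z : list (option Y)) : Prop :=
  exists w xs (k : nat), in_BS w xs /\ xs (Z.of_nat k) = Some x /\
    z = restr w (Z.of_nat k + a) (Z.of_nat k + b).

Definition I_lo (l m : nat) : Z := Z.of_nat m - Z.of_nat l.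
Definition I_hi (m : nat) : Z := Z.of_nat m - 1.

Definition future_unique (l m : nat) : Prop :=
  forall x z z', E (I_lo l m) (I_hi m) x z -> E (I_lo l m) (I_hi m) x z' ->
    str_restr z (l - m) (l - 1) = str_restr z' (l - m) (l - 1).

(** Membership in the quotient state space hat X^{l,triangledown}
    (sets of strings compared extensionally). *)
Definition in_quot (l : nat) (yh : list (option Y) -> Prop) : Prop :=
  exists x, forall z, yh z <-> E (I_lo l l) (I_hi l) x z.

Definition domino_consistent (l : nat) : Prop :=
  forall z, in_Pi_B (S l) z ->
  forall yh, in_quot l yh -> yh (str_restr z 0 (l - 1)) ->
  exists x, (forall z', E (I_lo l l) (I_hi l) x z' <-> yh z') /\
            E 0 (Z.of_nat l) x z.

End SM.

(* Future uniqueness with respect to I^l_l says that the whole string E^{I^l_l}(x)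
   is determined by x, so each class in the quotient state space is a singleton
   {p}.  For a window z of a behaviour, its prefix p lies in such a class, hence
   contains no diamond; so z starts at a nonnegative time t, and the state at time t
   has p as its future (so its class is the given one) and z as its [0,l]-string. *)
From Stdlib Require Import ZArith List Lia.

Lemma firstn_seq (m s n : nat) : (m <= n)%nat -> firstn m (seq s n) = seq s m.
Proof.
  revert s n; induction m as [|m IH]; intros s n Hmn; [reflexivity|].
  destruct n as [|n]; [lia|].
  simpl; f_equal; apply IH; lia.
Qed.

Lemma length_restr {A : Type} (w : Z -> A) (t1 t2 : Z) :
  length (restr w t1 t2) = Z.to_nat (t2 - t1 + 1).
Proof. unfold restr; rewrite length_map, length_seq; reflexivity. Qed.

Lemma firstn_restr {A : Type} (w : Z -> A) (t1 t2 : Z) (m : nat) :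
  (m <= Z.to_nat (t2 - t1 + 1))%nat ->
  firstn m (restr w t1 t2) = restr w t1 (t1 + Z.of_nat m - 1).
Proof.
  intros Hm; unfold restr; rewrite firstn_map, firstn_seq by lia.
  do 3 f_equal; lia.
Qed.

Lemma str_restr_full {A : Type} (q : list A) (l : nat) :
  length q = l -> str_restr q 0 (l - 1) = q.
Proof. intros Hq; unfold str_restr; apply firstn_all2; lia. Qed.

Section CorrespondingStrings.
Context {X U Y : Type} {delta : X -> U -> Y -> X -> Prop} {X0 : X -> Prop}.

Lemma E_length {a b : Z} {x : X} {q : list (option Y)} :
  E delta X0 a b x q -> length q = Z.to_nat (b - a + 1).
Proof.
  intros (w & xs & k & _ & _ & ->); rewrite length_restr; f_equal; lia.
Qed.

Lemma E_nonneg_no_diamond {a b : Z} {x : X} {q : list (option Y)} :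
  0 <= a -> E delta X0 a b x q -> ~ In None q.
Proof.
  intros Ha (w & xs & k & (mu & nu & xi & _ & _ & Hpos) & _ & ->) Hin.
  unfold restr in Hin; apply in_map_iff in Hin as (i & Hi & _).
  rewrite <- (Z2Nat.id (Z.of_nat k + a + Z.of_nat i)) in Hi by lia.
  rewrite (proj1 (Hpos _)) in Hi; discriminate.
Qed.

(* A string of E^{[a,b]} with a >= 0 is diamond-free, so a window of a behaviour
   (diamond before time 0) lying in it must start at a nonnegative time. *)
Lemma E_window_start_nonneg {w : Z -> option Y} {a b t1 t2 : Z} {x : X} :
  (forall t, t < 0 -> w t = None) -> 0 <= a -> t1 <= t2 ->
  E delta X0 a b x (restr w t1 t2) -> 0 <= t1.
Proof.
  intros Hneg Ha Ht HE.
  destruct (Z_lt_le_dec t1 0) as [Hlt|]; [exfalso|assumption].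
  apply (E_nonneg_no_diamond Ha HE).
  rewrite <- (Hneg t1 Hlt); unfold restr.
  replace (Z.to_nat (t2 - t1 + 1)) with (S (Z.to_nat (t2 - t1))) by lia.
  left; f_equal; lia.
Qed.

Lemma in_B_E {w : Z -> option Y} :
  in_B delta X0 w -> forall n : nat, exists x : X,
    forall a b, E delta X0 a b x (restr w (Z.of_nat n + a) (Z.of_nat n + b)).
Proof.
  intros (mu & nu & xi & Hf & Hneg & Hpos) n.
  set (xs := fun t : Z => if t <? 0 then None else Some (xi (Z.to_nat t))).
  assert (Hxs : forall m : nat, xs (Z.of_nat m) = Some (xi m)).
  { intros m; unfold xs; destruct (Z.ltb_spec (Z.of_nat m) 0); [lia|].
    rewrite Nat2Z.id; reflexivity. }
  assert (HBS : in_BS delta X0 w xs).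
  { exists mu, nu, xi; split; [exact Hf|split; [|auto]].
    intros t Ht; split; [auto|].
    unfold xs; destruct (Z.ltb_spec t 0); [reflexivity|lia]. }
  exists (xi n); intros a b; exists w, xs, n; auto.
Qed.

Lemma future_unique_E_eq {l : nat} {x : X} {q q' : list (option Y)} :
  future_unique delta X0 l l ->
  E delta X0 (I_lo l l) (I_hi l) x q -> E delta X0 (I_lo l l) (I_hi l) x q' -> q = q'.
Proof.
  intros Hfu Hq Hq'.
  pose proof (Hfu _ _ _ Hq Hq') as Heq.
  rewrite Nat.sub_diag in Heq.
  rewrite !str_restr_full in Heq; [exact Heq| |];
    [apply E_length in Hq' | apply E_length in Hq]; unfold I_lo, I_hi in *; lia.
Qed.

End CorrespondingStrings.

Theorem lemma11 (X U Y : Type) (delta : X -> U -> Y -> X -> Prop) (X0 : X -> Prop)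
  (HYfin : exists ys : list Y, forall y : Y, In y ys)
  (Hlr : live_reachable delta X0)
  (Hstd : standing_delta delta)
  (l : nat) (Hl : (1 <= l)%nat)
  (Hfu : future_unique delta X0 l l) :
  domino_consistent delta X0 l.
Proof.
  intros z (w & k & Hw & ->) yh (x0 & Hx0) Hyh.
  set (t := Z.of_nat k - Z.of_nat l).
  assert (Hprefix : str_restr (restr w (Z.of_nat k - Z.of_nat (S l) + 1) (Z.of_nat k)) 0 (l - 1)
                    = restr w t (t + Z.of_nat l - 1)).
  { unfold str_restr; simpl skipn.
    rewrite firstn_restr by lia; unfold t; f_equal; lia. }
  rewrite Hprefix in Hyh; apply Hx0 in Hyh.
  assert (Ht : 0 <= t).
  { destruct Hw as (mu & nu & xi & _ & Hneg & _).
    refine (E_window_start_nonneg _ _ _ Hyh); [exact Hneg|unfold I_lo|]; lia. }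
  destruct (in_B_E Hw (Z.to_nat t)) as (x & Hx).
  rewrite Z2Nat.id in Hx by exact Ht.
  assert (Hfuture : E delta X0 (I_lo l l) (I_hi l) x (restr w t (t + Z.of_nat l - 1))).
  { replace (restr w t _) with (restr w (t + I_lo l l) (t + I_hi l))
      by (unfold I_lo, I_hi; f_equal; lia).
    apply Hx. }
  exists x; split.
  - intros z'; rewrite Hx0; split; intros Hz'.
    + now rewrite (future_unique_E_eq Hfu Hz' Hfuture).
    + now rewrite (future_unique_E_eq Hfu Hz' Hyh).
  - replace (restr w _ _) with (restr w (t + 0) (t + Z.of_nat l))
      by (unfold t; f_equal; lia).
    apply Hx.
Qed.
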